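(* Let $X$ be a Banach space and $T\in \mathrm{Lip}_0(X)$. Then $$\sup \operatorname{Re} W(T)=\lim_{t\to 0^+}\frac{\|I+tT\|_L-1}{t},$$ and consequently $$\omega(T)=\max_{\alpha\in \mathbb{T}}\lim_{t\to 0^+}\frac{\|I+t\alpha T\|_L-1}{t}.$$
   Context: $X$ is a Banach space over $\mathbb{K}=\mathbb{R}$ or $\mathbb{C}$; $\mathbb{T}=\{\alpha\in\mathbb{K}:|\alpha|=1\}$; $I$ is the identity map of $X$. $\mathrm{Lip}_0(X)$ is the set of Lipschitz maps $T:X\to X$ with $T(0)=0$, normed by $\|T\|_L=\sup\{\|Tx-Ty\|/\|x-y\|: x,y\in X, x\neq y\}$. For $x\in X$, $D(x)=\{x^*\in X^*: x^*(x)=\|x^*\|\|x\|=\|x\|^2\}$. The Lipschitz numerical range of $T\in\mathrm{Lip}_0(X)$ is $W(T)=\{ f(Tx-Ty)/\|x-y\|^2 : x,y\in X,\ x\neq y,\ f\in D(x-y)\}$ and its numerical radius is $\omega(T)=\sup\{|\lambda|:\lambda\in W(T)\}$. *)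

From Stdlib Require Import Reals ClassicalEpsilon.
Open Scope R_scope.

Record Cx : Type := mkC { Cre : R; Cim : R }.
Definition Cadd (a b : Cx) : Cx := mkC (Cre a + Cre b) (Cim a + Cim b).
Definition Cmul (a b : Cx) : Cx :=
  mkC (Cre a * Cre b - Cim a * Cim b) (Cre a * Cim b + Cim a * Cre b).
Definition Cabs (a : Cx) : R := sqrt (Cre a * Cre a + Cim a * Cim a).

Inductive kind : Type := RealK | ComplexK.

Definition K (k : kind) : Type :=
  match k with RealK => R | ComplexK => Cx end.

Definition K_add {k : kind} : K k -> K k -> K k :=
  match k return K k -> K k -> K k with RealK => Rplus | ComplexK => Cadd end.
Definition K_mul {k : kind} : K k -> K k -> K k :=
  match k return K k -> K k -> K k with RealK => Rmult | ComplexK => Cmul end.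
Definition K_opp {k : kind} : K k -> K k :=
  match k return K k -> K k with
  | RealK => Ropp | ComplexK => fun a => mkC (- Cre a) (- Cim a) end.
Definition K_of_R {k : kind} : R -> K k :=
  match k return R -> K k with RealK => fun r => r | ComplexK => fun r => mkC r 0 end.
Definition K_abs {k : kind} : K k -> R :=
  match k return K k -> R with RealK => Rabs | ComplexK => Cabs end.
Definition K_re {k : kind} : K k -> R :=
  match k return K k -> R with RealK => fun r => r | ComplexK => Cre end.

Definition in_circle {k : kind} (a : K k) : Prop := K_abs a = 1.

Record NormedSpace (k : kind) : Type := {
  carrier :> Type;
  vzero : carrier;
  vadd : carrier -> carrier -> carrier;
  vopp : carrier -> carrier;
  vscal : K k -> carrier -> carrier;
  vnorm : carrier -> R;
  vadd_assoc : forall x y z, vadd x (vadd y z) = vadd (vadd x y) z;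
  vadd_comm : forall x y, vadd x y = vadd y x;
  vadd_zero : forall x, vadd x vzero = x;
  vadd_opp : forall x, vadd x (vopp x) = vzero;
  vscal_one : forall x, vscal (K_of_R 1) x = x;
  vscal_assoc : forall a b x, vscal a (vscal b x) = vscal (K_mul a b) x;
  vscal_addl : forall a b x, vscal (K_add a b) x = vadd (vscal a x) (vscal b x);
  vscal_addr : forall a x y, vscal a (vadd x y) = vadd (vscal a x) (vscal a y);
  vnorm_zero_iff : forall x, vnorm x = 0 <-> x = vzero;
  vnorm_scal : forall a x, vnorm (vscal a x) = K_abs a * vnorm x;
  vnorm_triangle : forall x y, vnorm (vadd x y) <= vnorm x + vnorm y
}.

Arguments vzero {k} _.
Arguments vadd {k} {_} _ _.
Arguments vopp {k} {_} _.
Arguments vscal {k} {_} _ _.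
Arguments vnorm {k} {_} _.

Definition vsub {k} {X : NormedSpace k} (x y : X) : X := vadd x (vopp y).

Definition complete {k} (X : NormedSpace k) : Prop :=
  forall u : nat -> X,
    (forall eps, 0 < eps -> exists N, forall m n, (N <= m)%nat -> (N <= n)%nat ->
        vnorm (vsub (u m) (u n)) < eps) ->
    exists l : X, forall eps, 0 < eps -> exists N, forall n, (N <= n)%nat ->
        vnorm (vsub (u n) l) < eps.

Definition Banach {k} (X : NormedSpace k) : Prop := complete X.

Definition in_dual {k} {X : NormedSpace k} (f : X -> K k) : Prop :=
  (forall x y, f (vadd x y) = K_add (f x) (f y)) /\
  (forall a x, f (vscal a x) = K_mul a (f x)) /\
  (exists M, forall x, K_abs (f x) <= M * vnorm x).

Definition is_dual_norm {k} {X : NormedSpace k} (f : X -> K k) (r : R) : Prop :=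
  is_lub (fun s => exists x : X, vnorm x <= 1 /\ s = K_abs (f x)) r.

Definition in_D {k} {X : NormedSpace k} (x : X) (f : X -> K k) : Prop :=
  in_dual f /\
  exists nf, is_dual_norm f nf /\
    f x = K_of_R (nf * vnorm x) /\ nf * vnorm x = vnorm x ^ 2.

Definition lipschitz {k} {X : NormedSpace k} (T : X -> X) : Prop :=
  exists M, forall x y, vnorm (vsub (T x) (T y)) <= M * vnorm (vsub x y).

Definition in_Lip0 {k} {X : NormedSpace k} (T : X -> X) : Prop :=
  lipschitz T /\ T (vzero X) = vzero X.

Definition lip_quotients {k} {X : NormedSpace k} (T : X -> X) : R -> Prop :=
  fun s => exists x y : X, x <> y /\
    s = vnorm (vsub (T x) (T y)) / vnorm (vsub x y).

Definition lip_norm {k} {X : NormedSpace k} (T : X -> X) : R :=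
  epsilon (inhabits 0) (fun r => is_lub (lip_quotients T) r).

Definition id_plus {k} {X : NormedSpace k} (c : K k) (T : X -> X) : X -> X :=
  fun x => vadd x (vscal c (T x)).

Definition in_W {k} {X : NormedSpace k} (T : X -> X) (lam : K k) : Prop :=
  exists (x y : X) (f : X -> K k), x <> y /\ in_D (vsub x y) f /\
    lam = K_mul (K_of_R (/ (vnorm (vsub x y) ^ 2))) (f (vsub (T x) (T y))).

Definition is_num_radius {k} {X : NormedSpace k} (T : X -> X) (w : R) : Prop :=
  is_lub (fun s => exists lam, in_W T lam /\ s = K_abs lam) w.

Definition lim_right0 (g : R -> R) (l : R) : Prop :=
  forall eps, 0 < eps -> exists delta, 0 < delta /\
    forall t, 0 < t < delta -> Rabs (g t - l) < eps.

Definition lip_quot {k} {X : NormedSpace k} (c : K k) (T : X -> X) (t : R) : R :=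
  (lip_norm (id_plus (K_mul (K_of_R t) c) T) - 1) / t.

(* Fix S = αT with T Lipschitz of constant C, write N(t) = ‖I + tS‖_L and
   m = sup Re W(S).  For x ≠ y put u = x - y and v = Sx - Sy.
   - Lower bound: if f ∈ D(u) then ‖u‖ ‖u + tv‖ ≥ Re f(u + tv) = ‖u‖² + t Re f(v),
     hence (N(t) - 1)/t ≥ m.
   - Upper bound: u' := u + tv equals x - y' with y' = y - tv; for g ∈ D(u'),
     ‖u'‖² = Re g(u) + t Re g(Sx - Sy') + t Re g(Sy' - Sy)
           ≤ ‖u'‖ ‖u‖ + t m ‖u'‖² + C² t² ‖u'‖ ‖u‖,
     hence N(t)(1 - tm) ≤ 1 + C²t² and (N(t) - 1)/t → m as t → 0+.
   Both bounds need D(u) ≠ ∅, i.e. the Hahn–Banach theorem; we prove the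
   instance we need (a real functional dominated by the norm and equal to ‖u‖
   at u) from Zorn's lemma applied to sublinear minorants of the norm, and then
   complexify.  Finally W(αT) = αW(T), so sup Re W(αT) ≤ ω(T) whenever |α| = 1,
   with equality for α = ±1 over ℝ and, over ℂ, for the maximiser of the
   continuous function θ ↦ sup Re(e^{iθ}W(T)) on [0, 2π]. *)

From Stdlib Require Import Reals Lra Psatz ClassicalEpsilon FunctionalExtensionality Classical.
From mathcomp Require classical_sets boolp.
Open Scope R_scope.

Lemma Cx_eq (a b : Cx) : Cre a = Cre b -> Cim a = Cim b -> a = b.
Proof. destruct a, b; simpl; intros -> ->; reflexivity. Qed.

Lemma K_of_R_add {k : kind} (a b : R) :
  K_add (K_of_R a) (K_of_R b) = (K_of_R (a + b) : K k).
Proof. destruct k; simpl; auto. apply Cx_eq; simpl; ring. Qed.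

Lemma K_of_R_mul {k : kind} (a b : R) :
  K_mul (K_of_R a) (K_of_R b) = (K_of_R (a * b) : K k).
Proof. destruct k; simpl; auto. apply Cx_eq; simpl; ring. Qed.

Lemma K_mul_comm {k : kind} (a b : K k) : K_mul a b = K_mul b a.
Proof. destruct k; simpl; [ring|]. apply Cx_eq; simpl; ring. Qed.

Lemma K_mul_assoc {k : kind} (a b c : K k) : K_mul a (K_mul b c) = K_mul (K_mul a b) c.
Proof. destruct k; simpl; [ring|]. apply Cx_eq; simpl; ring. Qed.

Lemma K_mul_0_l {k : kind} (a : K k) : K_mul (K_of_R 0) a = K_of_R 0.
Proof. destruct k; simpl; [ring|]. apply Cx_eq; simpl; ring. Qed.

Lemma K_mul_1_l {k : kind} (a : K k) : K_mul (K_of_R 1) a = a.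
Proof. destruct k; simpl; [ring|]. apply Cx_eq; simpl; ring. Qed.

Lemma K_abs_of_R {k : kind} (r : R) : K_abs (K_of_R r : K k) = Rabs r.
Proof.
  destruct k; simpl; auto. unfold Cabs; simpl.
  replace (r * r + 0 * 0) with (r * r) by ring. apply sqrt_Rsqr_abs.
Qed.

Lemma K_abs_mul {k : kind} (a b : K k) : K_abs (K_mul a b) = K_abs a * K_abs b.
Proof.
  destruct k; simpl; [apply Rabs_mult|].
  unfold Cabs; destruct a as [a1 a2], b as [b1 b2]; simpl.
  rewrite <- sqrt_mult by nra. f_equal; ring.
Qed.

Lemma K_abs_nonneg {k : kind} (a : K k) : 0 <= K_abs a.
Proof. destruct k; simpl; [apply Rabs_pos | apply sqrt_pos]. Qed.

Lemma K_re_of_R {k : kind} (r : R) : K_re (K_of_R r : K k) = r.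
Proof. destruct k; reflexivity. Qed.

Lemma K_re_add {k : kind} (a b : K k) : K_re (K_add a b) = K_re a + K_re b.
Proof. destruct k; reflexivity. Qed.

Lemma K_re_mulR {k : kind} (r : R) (a : K k) : K_re (K_mul (K_of_R r) a) = r * K_re a.
Proof. destruct k; simpl; ring. Qed.

Lemma Cre_le_abs (a : Cx) : Rabs (Cre a) <= Cabs a.
Proof. unfold Cabs. rewrite <- sqrt_Rsqr_abs. apply sqrt_le_1_alt. unfold Rsqr. nra. Qed.

Lemma Cim_le_abs (a : Cx) : Rabs (Cim a) <= Cabs a.
Proof. unfold Cabs. rewrite <- sqrt_Rsqr_abs. apply sqrt_le_1_alt. unfold Rsqr. nra. Qed.

Lemma K_re_le_abs {k : kind} (a : K k) : Rabs (K_re a) <= K_abs a.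
Proof. destruct k; simpl; [lra | apply Cre_le_abs]. Qed.

Lemma K_re_bounds {k : kind} (a : K k) : - K_abs a <= K_re a <= K_abs a.
Proof.
  pose proof (K_re_le_abs a). pose proof (Rle_abs (K_re a)).
  pose proof (Rle_abs (- K_re a)). rewrite Rabs_Ropp in *. lra.
Qed.

Arguments vadd_assoc {k n} x y z.
Arguments vadd_comm {k n} x y.
Arguments vadd_zero {k n} x.
Arguments vscal_assoc {k n} a b x.
Arguments vscal_addl {k n} a b x.
Arguments vscal_addr {k n} a x y.
Arguments vnorm_zero_iff {k n} x.
Arguments vnorm_scal {k n} a x.
Arguments vnorm_triangle {k n} x y.

Section VectorAlgebra.
Context {k : kind} {X : NormedSpace k}.

Definition rscal (r : R) (x : X) : X := vscal (K_of_R r) x.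

Lemma vnorm_vzero : vnorm (vzero X) = 0.
Proof. apply vnorm_zero_iff. reflexivity. Qed.

Lemma rscal_addl (a b : R) (x : X) : rscal (a + b) x = vadd (rscal a x) (rscal b x).
Proof. unfold rscal. rewrite <- vscal_addl, K_of_R_add. reflexivity. Qed.

Lemma rscal_addr (a : R) (x y : X) : rscal a (vadd x y) = vadd (rscal a x) (rscal a y).
Proof. apply vscal_addr. Qed.

Lemma rscal_rscal (a b : R) (x : X) : rscal a (rscal b x) = rscal (a * b) x.
Proof. unfold rscal. rewrite vscal_assoc, K_of_R_mul. reflexivity. Qed.

Lemma rscal_one (x : X) : rscal 1 x = x.
Proof. apply vscal_one. Qed.

Lemma vnorm_rscal (a : R) (x : X) : vnorm (rscal a x) = Rabs a * vnorm x.
Proof. unfold rscal. rewrite vnorm_scal, K_abs_of_R. reflexivity. Qed.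

Lemma rscal_zero (x : X) : rscal 0 x = vzero X.
Proof. apply vnorm_zero_iff. rewrite vnorm_rscal, Rabs_R0. ring. Qed.

Lemma vscal_rscal (a : K k) (r : R) (x : X) :
  vscal a (rscal r x) = rscal r (vscal a x).
Proof. unfold rscal. rewrite !vscal_assoc, K_mul_comm. reflexivity. Qed.

Lemma vadd_zero_l (x : X) : vadd (vzero X) x = x.
Proof. rewrite vadd_comm; apply vadd_zero. Qed.

Lemma vadd_rscal_m1 (x : X) : vadd x (rscal (-1) x) = vzero X.
Proof.
  rewrite <- (rscal_one x) at 1. rewrite <- rscal_addl.
  replace (1 + -1) with 0 by ring. apply rscal_zero.
Qed.

Lemma vsub_rscal (x y : X) : vsub x y = vadd x (rscal (-1) y).
Proof.
  unfold vsub. f_equal.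
  rewrite <- (vadd_zero (vopp y)), <- (vadd_rscal_m1 y), vadd_assoc.
  rewrite (vadd_comm (vopp y) y), vadd_opp. apply vadd_zero_l.
Qed.

Lemma vnorm_nonneg (x : X) : 0 <= vnorm x.
Proof.
  pose proof (vnorm_triangle x (rscal (-1) x)) as H.
  rewrite vadd_rscal_m1, vnorm_vzero, vnorm_rscal, Rabs_left in H by lra. lra.
Qed.

Lemma vnorm_pos (u : X) : u <> vzero X -> 0 < vnorm u.
Proof.
  intros Hu. destruct (vnorm_nonneg u) as [H|H]; auto.
  exfalso; apply Hu, vnorm_zero_iff; auto.
Qed.

Lemma vsub_eq0 (x y : X) : vsub x y = vzero X <-> x = y.
Proof.
  rewrite vsub_rscal. split.
  - intro H. rewrite <- (vadd_zero x), <- (vadd_rscal_m1 y).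
    rewrite (vadd_comm y), vadd_assoc, H. apply vadd_zero_l.
  - intros ->. apply vadd_rscal_m1.
Qed.

Lemma vsub_neq0 (x y : X) : x <> y -> vsub x y <> vzero X.
Proof. intros Hxy H. apply Hxy, vsub_eq0, H. Qed.

Lemma vadd_swap (a b c d : X) :
  vadd (vadd a b) (vadd c d) = vadd (vadd a c) (vadd b d).
Proof.
  rewrite !vadd_assoc. f_equal. rewrite <- !vadd_assoc. f_equal. apply vadd_comm.
Qed.

Lemma vadd_sub_cancel_l (x w : X) : vadd (vadd x w) (rscal (-1) x) = w.
Proof. rewrite (vadd_comm x w), <- vadd_assoc, vadd_rscal_m1. apply vadd_zero. Qed.

Lemma vadd_rscal_split (x y z : X) (s1 s2 : R) :
  vadd (vadd x y) (rscal (s1 + s2) z) = vadd (vadd x (rscal s1 z)) (vadd y (rscal s2 z)).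
Proof. rewrite rscal_addl. apply vadd_swap. Qed.

Lemma vadd_rscal_factor (x z : X) (r s : R) : r <> 0 ->
  vadd (rscal r x) (rscal s z) = rscal r (vadd x (rscal (s / r) z)).
Proof. intro Hr. rewrite rscal_addr, rscal_rscal. do 3 f_equal. field. auto. Qed.

Lemma vsub_perturb (x y a b : X) (t : R) :
  vsub (vadd x (rscal t a)) (vadd y (rscal t b)) = vadd (vsub x y) (rscal t (vsub a b)).
Proof.
  rewrite !vsub_rscal, !rscal_addr, vadd_swap, !rscal_rscal. do 3 f_equal. ring.
Qed.

Lemma vsub_vsub_rscal (x y v : X) (t : R) :
  vsub x (vsub y (rscal t v)) = vadd (vsub x y) (rscal t v).
Proof. rewrite !vsub_rscal, rscal_addr, !rscal_rscal, vadd_assoc. do 3 f_equal. ring. Qed.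

Lemma vsub_vsub_rscal_l (y v : X) (t : R) : vsub (vsub y (rscal t v)) y = rscal (-t) v.
Proof.
  rewrite !vsub_rscal, rscal_rscal, (vadd_comm y), <- vadd_assoc, vadd_rscal_m1, vadd_zero.
  f_equal. ring.
Qed.

Lemma vsub_vsub_common (a b c : X) : vsub (vsub a b) (vsub a c) = vsub c b.
Proof.
  rewrite !vsub_rscal, rscal_addr, rscal_rscal. replace (-1 * -1) with 1 by ring.
  rewrite rscal_one, vadd_swap, vadd_rscal_m1, vadd_zero_l. apply vadd_comm.
Qed.

Lemma vscal_vsub (a : K k) (x y : X) : vsub (vscal a x) (vscal a y) = vscal a (vsub x y).
Proof. rewrite !vsub_rscal, vscal_addr, vscal_rscal. reflexivity. Qed.

End VectorAlgebra.
Open Scope R_scope.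

Definition bounded_below (E : R -> Prop) : Prop := exists m, forall a, E a -> m <= a.

Definition Rinf (E : R -> Prop) : R :=
  - epsilon (inhabits 0) (fun m => is_lub (fun y => E (- y)) m).

Lemma Rinf_spec (E : R -> Prop) : (exists a, E a) -> bounded_below E ->
  is_lub (fun y => E (- y)) (- Rinf E).
Proof.
  intros [a Ha] [m Hm]. unfold Rinf. rewrite Ropp_involutive. apply epsilon_spec.
  destruct (completeness (fun y => E (- y))) as [l Hl].
  - exists (- m). intros y Hy. apply Hm in Hy. lra.
  - exists (- a). rewrite Ropp_involutive. auto.
  - exists l; exact Hl.
Qed.

Lemma Rinf_lb (E : R -> Prop) : bounded_below E -> forall a, E a -> Rinf E <= a.
Proof.
  intros Hm a Ha. destruct (Rinf_spec E (ex_intro _ a Ha) Hm) as [H1 _].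
  assert (- a <= - Rinf E) by (apply H1; rewrite Ropp_involutive; auto). lra.
Qed.

Lemma Rinf_glb (E : R -> Prop) : (exists a, E a) ->
  forall m, (forall a, E a -> m <= a) -> m <= Rinf E.
Proof.
  intros Ha m Hm. destruct (Rinf_spec E Ha (ex_intro _ m Hm)) as [_ H2].
  assert (- Rinf E <= - m) by (apply H2; intros y Hy; apply Hm in Hy; lra). lra.
Qed.

Lemma Rinf_const (E : R -> Prop) (c : R) : (exists a, E a) ->
  (forall a, E a -> a = c) -> Rinf E = c.
Proof.
  intros Hne Hc. apply Rle_antisym.
  - destruct Hne as [a Ha]. rewrite <- (Hc a Ha). apply Rinf_lb; auto.
    exists c. intros b Hb. rewrite (Hc b Hb). lra.
  - apply Rinf_glb; auto. intros a Ha. rewrite (Hc a Ha). lra.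
Qed.

Lemma Rinf_scale (E F : R -> Prop) (r : R) : 0 < r ->
  (forall a, F a <-> exists b, E b /\ a = r * b) ->
  (exists a, E a) -> bounded_below E -> Rinf F = r * Rinf E.
Proof.
  intros Hr HF [a0 Ha0] [m Hm].
  assert (HFne : exists a, F a) by (exists (r * a0); apply HF; eauto).
  apply Rle_antisym.
  - assert (Rinf F / r <= Rinf E).
    { apply Rinf_glb; [eauto|]. intros b Hb.
      assert (Rinf F <= r * b).
      { apply Rinf_lb; [|apply HF; eauto].
        exists (r * m). intros a Ha. apply HF in Ha as [b' [Hb' ->]].
        apply Rmult_le_compat_l; [lra|auto]. }
      unfold Rdiv. apply (Rmult_le_reg_l r); auto.
      replace (r * (Rinf F * / r)) with (Rinf F) by (field; lra). lra. }
    apply (Rmult_le_compat_l r) in H; [|lra].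
    replace (r * (Rinf F / r)) with (Rinf F) in H by (field; lra). exact H.
  - apply Rinf_glb; auto. intros a Ha. apply HF in Ha as [b [Hb ->]].
    apply Rmult_le_compat_l; [lra|]. apply Rinf_lb; [exists m|]; auto.
Qed.

Lemma Rinf_add_glb (A B : R -> Prop) (c : R) :
  (exists a, A a) -> (exists b, B b) ->
  (forall a b, A a -> B b -> c <= a + b) -> c <= Rinf A + Rinf B.
Proof.
  intros HA HB Hab.
  assert (c - Rinf A <= Rinf B); [|lra].
  apply Rinf_glb; auto. intros b Hb.
  assert (c - b <= Rinf A); [|lra].
  apply Rinf_glb; auto. intros a Ha. specialize (Hab a b Ha Hb). lra.
Qed.

Lemma zorn_preorder (T : Type) (t0 : T) (Rel : T -> T -> Prop) :
  (forall t, Rel t t) -> (forall r s t, Rel r s -> Rel s t -> Rel r t) ->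
  (forall A : T -> Prop, (forall s t, A s -> A t -> Rel s t \/ Rel t s) ->
     exists t, forall s, A s -> Rel s t) ->
  exists t, forall s, Rel t s -> Rel s t.
Proof.
  intros Hrefl Htrans Hchain.
  assert (Hb : forall P : Prop, boolp.asbool P = true <-> P)
    by (intros P; symmetry; apply Bool.reflect_iff, boolp.asboolP).
  destruct (@classical_sets.ZL_preorder T t0 (fun a b => boolp.asbool (Rel a b))) as [t Hm].
  - intro t; apply Hb; auto.
  - intros r s t H1 H2; apply Hb; apply (proj1 (Hb _)) in H1, H2; eauto.
  - intros A HA. destruct (Hchain A) as [t Ht].
    + intros s t Hs Ht. destruct (HA s t Hs Ht) as [H|H]; [left|right]; apply Hb, H.
    + exists t; intros s Hs; apply Hb; auto.
  - exists t; intros s Hs. apply (proj1 (Hb _)), Hm, Hb, Hs.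
Qed.

Section HahnBanach.
Context {k : kind} {X : NormedSpace k}.

Definition sublin (q : X -> R) : Prop :=
  (forall x y, q (vadd x y) <= q x + q y) /\
  (forall r x, 0 <= r -> q (rscal r x) = r * q x).

Lemma sublin_zero (q : X -> R) : sublin q -> q (vzero X) = 0.
Proof. intros [_ H]. rewrite <- (rscal_zero (vzero X)), H by lra. ring. Qed.

Lemma sublin_opp (q : X -> R) : sublin q -> forall x, - q (rscal (-1) x) <= q x.
Proof.
  intros Hq x. pose proof (proj1 Hq x (rscal (-1) x)) as H.
  rewrite vadd_rscal_m1, sublin_zero in H by auto. lra.
Qed.

Lemma vnorm_sublin : sublin (@vnorm k X).
Proof.
  split; [apply vnorm_triangle|]. intros r x Hr. rewrite vnorm_rscal, Rabs_pos_eq; auto.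
Qed.

Definition push_down_set (q : X -> R) (z x : X) (a : R) : Prop :=
  exists s, 0 <= s /\ a = q (vadd x (rscal s z)) - s * q z.

Definition push_down (q : X -> R) (z x : X) : R := Rinf (push_down_set q z x).

Section PushDown.
Variables (q : X -> R) (z : X).
Hypothesis Hq : sublin q.

Lemma push_down_set_at0 (x : X) : push_down_set q z x (q x).
Proof. exists 0. split; [lra|]. rewrite rscal_zero, vadd_zero. ring. Qed.

Lemma push_down_set_bounded (x : X) : bounded_below (push_down_set q z x).
Proof.
  exists (- q (rscal (-1) x)). intros a [s [Hs ->]].
  pose proof (proj1 Hq (vadd x (rscal s z)) (rscal (-1) x)) as H.
  rewrite vadd_sub_cancel_l, (proj2 Hq) in H by auto. lra.
Qed.

Lemma push_down_le_set (x : X) (a : R) : push_down_set q z x a -> push_down q z x <= a.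
Proof. apply Rinf_lb, push_down_set_bounded. Qed.

Lemma push_down_le (x : X) : push_down q z x <= q x.
Proof. apply push_down_le_set, push_down_set_at0. Qed.

Lemma push_down_opp : push_down q z (rscal (-1) z) <= - q z.
Proof.
  apply push_down_le_set. exists 1. split; [lra|].
  rewrite vadd_comm, <- (rscal_addl 1 (-1)). replace (1 + -1) with 0 by ring.
  rewrite rscal_zero, sublin_zero by auto. ring.
Qed.

Lemma push_down_subadd (x y : X) :
  push_down q z (vadd x y) <= push_down q z x + push_down q z y.
Proof.
  apply Rinf_add_glb; [exists (q x); apply push_down_set_at0
                      |exists (q y); apply push_down_set_at0|].
  intros a b [s1 [Hs1 ->]] [s2 [Hs2 ->]].
  eapply Rle_trans.
  - apply push_down_le_set. exists (s1 + s2). split; [lra|reflexivity].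
  - rewrite vadd_rscal_split.
    pose proof (proj1 Hq (vadd x (rscal s1 z)) (vadd y (rscal s2 z))). lra.
Qed.

Lemma push_down_homog (r : R) (x : X) : 0 <= r ->
  push_down q z (rscal r x) = r * push_down q z x.
Proof.
  intros [Hr| <-].
  - apply Rinf_scale; auto.
    + intros a. split.
      * intros [s [Hs ->]]. exists (q (vadd x (rscal (s / r) z)) - s / r * q z). split.
        -- exists (s / r). split; auto.
           apply Rmult_le_pos; [lra|left; apply Rinv_0_lt_compat; auto].
        -- rewrite vadd_rscal_factor, (proj2 Hq) by lra. field. lra.
      * intros [b [[s [Hs ->]] ->]]. exists (r * s). split; [nra|].
        rewrite vadd_rscal_factor, (proj2 Hq) by lra.
        replace (r * s / r) with s by (field; lra). ring.
    + exists (q x). apply push_down_set_at0.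
    + apply push_down_set_bounded.
  - rewrite rscal_zero, Rmult_0_l. apply Rinf_const.
    + exists (q (vzero X)). apply push_down_set_at0.
    + intros a [s [Hs ->]]. rewrite vadd_zero_l, (proj2 Hq) by auto. ring.
Qed.

Lemma push_down_sublin : sublin (push_down q z).
Proof. split; [apply push_down_subadd | apply push_down_homog]. Qed.

End PushDown.

(* A sublinear q that cannot be pushed down in any direction is odd,
   hence real-linear. *)
Lemma unpushable_sublin_linear (q : X -> R) : sublin q ->
  (forall z x, q x <= push_down q z x) ->
  (forall x y, q (vadd x y) = q x + q y) /\ (forall r x, q (rscal r x) = r * q x).
Proof.
  intros Hq Hmin.
  assert (Hodd : forall z, q (rscal (-1) z) = - q z).
  { intros z. pose proof (Hmin z (rscal (-1) z)). pose proof (push_down_opp q z Hq).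
    pose proof (sublin_opp q Hq z). lra. }
  split.
  - intros x y. apply Rle_antisym; [apply (proj1 Hq)|].
    pose proof (proj1 Hq (rscal (-1) x) (rscal (-1) y)) as H.
    rewrite <- rscal_addr, !Hodd in H. lra.
  - intros r x. destruct (Rle_dec 0 r) as [Hr|Hr]; [apply (proj2 Hq); auto|].
    replace (rscal r x) with (rscal (-1) (rscal (-r) x)) by (rewrite rscal_rscal; f_equal; ring).
    rewrite Hodd, (proj2 Hq) by lra. ring.
Qed.

Lemma chain_inf_sublin (h : X -> R) (C : (X -> R) -> Prop) :
  sublin h -> C h -> (forall c, C c -> sublin c /\ forall x, c x <= h x) ->
  (forall c1 c2, C c1 -> C c2 -> (forall x, c1 x <= c2 x) \/ (forall x, c2 x <= c1 x)) ->
  sublin (fun x => Rinf (fun r => exists c, C c /\ r = c x)) /\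
  (forall c, C c -> forall x, Rinf (fun r => exists c', C c' /\ r = c' x) <= c x).
Proof.
  intros Hh Ch HC Htot.
  set (m := fun x => Rinf (fun r => exists c, C c /\ r = c x)).
  assert (Hne : forall x, exists a, exists c, C c /\ a = c x) by (intros x; exists (h x), h; auto).
  assert (Hbdd : forall x, bounded_below (fun r => exists c, C c /\ r = c x)).
  { intros x. exists (- h (rscal (-1) x)). intros a [c [Hc ->]].
    destruct (HC c Hc) as [Hs Hle].
    pose proof (sublin_opp c Hs x). pose proof (Hle (rscal (-1) x)). lra. }
  assert (Hmc : forall c, C c -> forall x, m x <= c x)
    by (intros c Hc x; apply Rinf_lb; eauto).
  split; [split|exact Hmc].
  - intros x y. apply Rinf_add_glb; auto. intros a b [c1 [H1 ->]] [c2 [H2 ->]].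
    destruct (HC c1 H1) as [S1 _], (HC c2 H2) as [S2 _].
    destruct (Htot c1 c2 H1 H2) as [L|L].
    + pose proof (Hmc c1 H1 (vadd x y)). pose proof (proj1 S1 x y). pose proof (L y). lra.
    + pose proof (Hmc c2 H2 (vadd x y)). pose proof (proj1 S2 x y). pose proof (L x). lra.
  - intros r x [Hr| <-].
    + apply Rinf_scale; auto. intros a. split.
      * intros [c [Hc ->]]. exists (c x). split; eauto. apply (proj2 (proj1 (HC c Hc))). lra.
      * intros [b [[c [Hc ->]] ->]]. exists c. split; auto.
        symmetry. apply (proj2 (proj1 (HC c Hc))). lra.
    + rewrite rscal_zero, Rmult_0_l. apply Rinf_const; auto.
      intros a [c [Hc ->]]. apply sublin_zero, HC, Hc.
Qed.

Lemma linear_below_sublin (h : X -> R) : sublin h -> exists g : X -> R,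
  (forall x y, g (vadd x y) = g x + g y) /\ (forall r x, g (rscal r x) = r * g x) /\
  (forall x, g x <= h x).
Proof.
  intros Hh.
  pose (Tq := {q : X -> R | sublin q /\ forall x, q x <= h x}).
  pose (t0 := exist (fun q : X -> R => sublin q /\ forall x, q x <= h x) h
                (conj Hh (fun x => Rle_refl _)) : Tq).
  destruct (zorn_preorder Tq t0 (fun a b => forall x, proj1_sig b x <= proj1_sig a x))
    as [[q [Hq Hqh]] Hmax].
  - intros t x; lra.
  - intros a b c H1 H2 x. specialize (H1 x); specialize (H2 x); lra.
  - intros A HA.
    pose (C := fun c : X -> R => c = h \/ exists a, A a /\ c = proj1_sig a).
    destruct (chain_inf_sublin h C Hh (or_introl eq_refl)) as [Hs Hle].
    + intros c [->|[[a [Ha1 Ha2]] [_ ->]]]; simpl; split; auto. intros; lra.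
    + intros c1 c2 [->|[a [Ha ->]]] [->|[b [Hb ->]]].
      * left; intros; lra.
      * right; intros x. destruct b as [b [? ?]]; simpl; auto.
      * left; intros x. destruct a as [a [? ?]]; simpl; auto.
      * destruct (HA a b Ha Hb) as [L|L]; [right|left]; exact L.
    + assert (Hmh : forall x, Rinf (fun r => exists c, C c /\ r = c x) <= h x)
        by (intros; apply Hle; left; auto).
      exists (exist (fun q : X -> R => sublin q /\ forall x, q x <= h x) _ (conj Hs Hmh)).
      intros s Hs' x. simpl. apply Hle. right. eauto.
  - assert (Hunpush : forall z x, q x <= push_down q z x).
    { intros z x. assert (Hpush : forall y, push_down q z y <= h y).
      { intros y. pose proof (push_down_le q z Hq y). pose proof (Hqh y). lra. }
      apply (Hmax (exist _ (push_down q z) (conj (push_down_sublin q z Hq) Hpush))).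
      intros y. apply push_down_le; auto. }
    destruct (unpushable_sublin_linear q Hq Hunpush) as [Hadd Hmul].
    exists q. auto.
Qed.

Lemma norming_real_functional (u : X) : exists g : X -> R,
  (forall x y, g (vadd x y) = g x + g y) /\ (forall r x, g (rscal r x) = r * g x) /\
  (forall x, g x <= vnorm x) /\ g u = vnorm u.
Proof.
  destruct (linear_below_sublin (push_down vnorm u) (push_down_sublin _ u vnorm_sublin))
    as [g [Hadd [Hmul Hle]]].
  exists g. split; [|split; [|split]]; auto.
  - intros x. pose proof (Hle x). pose proof (push_down_le vnorm u vnorm_sublin x). lra.
  - pose proof (Hle u). pose proof (push_down_le vnorm u vnorm_sublin u).
    pose proof (Hle (rscal (-1) u)). pose proof (push_down_opp vnorm u vnorm_sublin).
    rewrite Hmul in *. lra.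
Qed.

End HahnBanach.

Section SupportingFunctionals.
Context {k : kind} {X : NormedSpace k}.

Lemma in_D_intro (u : X) (f : X -> K k) : u <> vzero X ->
  (forall x y, f (vadd x y) = K_add (f x) (f y)) ->
  (forall a x, f (vscal a x) = K_mul a (f x)) ->
  (forall x, K_abs (f x) <= vnorm u * vnorm x) ->
  f u = K_of_R (vnorm u * vnorm u) -> in_D u f.
Proof.
  intros Hu Hadd Hmul Hb Hfu. pose proof (vnorm_pos u Hu) as Hn.
  split; [split; [auto|split; [auto|exists (vnorm u); auto]]|].
  exists (vnorm u). split; [|split; [auto|ring]]. split.
  - intros s [x [Hx ->]]. pose proof (Hb x). pose proof (vnorm_nonneg x). nra.
  - intros b Hub. apply Hub. exists (rscal (/ vnorm u) u). split.
    + rewrite vnorm_rscal, Rabs_pos_eq by (left; apply Rinv_0_lt_compat; auto).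
      right; field; lra.
    + unfold rscal. rewrite Hmul, K_abs_mul, Hfu, !K_abs_of_R, !Rabs_pos_eq.
      field; lra. nra. left; apply Rinv_0_lt_compat; auto.
Qed.

Lemma dual_rscal (f : X -> K k) : in_dual f ->
  forall r x, f (rscal r x) = K_mul (K_of_R r) (f x).
Proof. intros [_ [H _]] r x. apply H. Qed.

Lemma dual_re_add (f : X -> K k) : in_dual f ->
  forall a b t, K_re (f (vadd a (rscal t b))) = K_re (f a) + t * K_re (f b).
Proof.
  intros Hf a b t. rewrite (proj1 Hf), K_re_add, dual_rscal, K_re_mulR by auto. ring.
Qed.

Lemma dual_re_sub (f : X -> K k) : in_dual f ->
  forall a b, K_re (f (vsub a b)) = K_re (f a) - K_re (f b).
Proof. intros Hf a b. rewrite vsub_rscal, dual_re_add by auto. ring. Qed.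

Lemma in_D_props (u : X) (f : X -> K k) : u <> vzero X -> in_D u f ->
  K_re (f u) = vnorm u * vnorm u /\ (forall z, K_abs (f z) <= vnorm u * vnorm z).
Proof.
  intros Hu [Hf [nf [Hnf [Hfu Hnn]]]]. pose proof (vnorm_pos u Hu) as Hn.
  assert (nf = vnorm u) as ->.
  { apply (Rmult_eq_reg_r (vnorm u)); [|lra]. rewrite Hnn. ring. }
  split; [rewrite Hfu, K_re_of_R; reflexivity|].
  intros z. destruct (classic (z = vzero X)) as [->|Hz].
  - rewrite <- (rscal_zero (vzero X)), dual_rscal, K_mul_0_l, K_abs_of_R by auto.
    rewrite vnorm_rscal, !Rabs_R0. lra.
  - pose proof (vnorm_pos z Hz) as Hzn.
    assert (H : K_abs (f (rscal (/ vnorm z) z)) <= vnorm u).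
    { apply (proj1 Hnf). exists (rscal (/ vnorm z) z). split; auto.
      rewrite vnorm_rscal, Rabs_pos_eq by (left; apply Rinv_0_lt_compat; auto).
      right; field; lra. }
    rewrite dual_rscal, K_abs_mul, K_abs_of_R, Rabs_pos_eq in H
      by (auto; left; apply Rinv_0_lt_compat; auto).
    apply (Rmult_le_compat_l (vnorm z)) in H; [|lra].
    replace (vnorm z * (/ vnorm z * K_abs (f z))) with (K_abs (f z)) in H by (field; lra).
    lra.
Qed.

End SupportingFunctionals.

Lemma supporting_functional_real {X : NormedSpace RealK} (u : X) :
  u <> vzero X -> exists f : X -> K RealK, in_D u f.
Proof.
  intros Hu. destruct (norming_real_functional u) as [g [Hadd [Hmul [Hle Hgu]]]].
  assert (Habs : forall x, Rabs (g x) <= vnorm x).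
  { intros x. pose proof (Hle x). pose proof (Hle (rscal (-1) x)).
    rewrite Hmul, vnorm_rscal, Rabs_left in * by lra. apply Rabs_le. lra. }
  pose proof (vnorm_pos u Hu).
  exists (fun x => vnorm u * g x). apply in_D_intro; auto; simpl.
  - intros x y. rewrite Hadd. ring.
  - intros a x. change (@vscal RealK X a x) with (rscal a x). rewrite Hmul. ring.
  - intros x. rewrite Rabs_mult, Rabs_pos_eq by lra.
    apply Rmult_le_compat_l; [lra|auto].
  - rewrite Hgu. reflexivity.
Qed.

(* Over C a real-linear g determines the complex-linear x ↦ g(x) - i g(ix). *)
Definition iC : K ComplexK := mkC 0 1.

Lemma vscal_complex {X : NormedSpace ComplexK} (p q : R) (x : X) :
  vscal (mkC p q : K ComplexK) x = vadd (rscal p x) (rscal q (vscal iC x)).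
Proof.
  unfold rscal. rewrite vscal_assoc, <- vscal_addl. f_equal. apply Cx_eq; simpl; ring.
Qed.

Section Complexification.
Variables (X : NormedSpace ComplexK) (g : X -> R).
Hypotheses (Hadd : forall x y, g (vadd x y) = g x + g y)
           (Hmul : forall r x, g (rscal r x) = r * g x)
           (Hle : forall x, g x <= vnorm x).

Lemma real_functional_complex (p q : R) (x : X) :
  g (vscal (mkC p q : K ComplexK) x) = p * g x + q * g (vscal iC x).
Proof. rewrite vscal_complex, Hadd, !Hmul. reflexivity. Qed.

(* |g(x) - i g(ix)| <= ‖x‖, by evaluating g at a unimodular multiple of x. *)
Lemma complexified_bound (x : X) :
  sqrt (g x * g x + g (vscal iC x) * g (vscal iC x)) <= vnorm x.
Proof.
  set (a := g x). set (b := g (vscal iC x)). set (rho := sqrt (a * a + b * b)).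
  assert (Hr2 : rho * rho = a * a + b * b) by (apply sqrt_sqrt; nra).
  destruct (sqrt_pos (a * a + b * b)) as [Hr|Hr]; fold rho in Hr;
    [|rewrite <- Hr; apply vnorm_nonneg].
  pose proof (Hle (vscal (mkC (a / rho) (b / rho) : K ComplexK) x)) as H.
  rewrite real_functional_complex, vnorm_scal in H. fold a b in H.
  assert (Hab : a / rho * a + b / rho * b = rho).
  { replace (a / rho * a + b / rho * b) with ((a * a + b * b) / rho) by (field; lra).
    rewrite <- Hr2. field; lra. }
  assert (Hc : K_abs (mkC (a / rho) (b / rho) : K ComplexK) = 1).
  { simpl. unfold Cabs; simpl. rewrite <- sqrt_1. f_equal.
    replace (a / rho * (a / rho) + b / rho * (b / rho)) with ((a * a + b * b) / (rho * rho))
      by (field; lra).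
    rewrite <- Hr2. field. lra. }
  rewrite Hc in H. lra.
Qed.

Lemma supporting_functional_complex (u : X) :
  g u = vnorm u -> u <> vzero X -> exists f : X -> K ComplexK, in_D u f.
Proof.
  intros Hgu Hu. pose proof (vnorm_pos u Hu) as Hn.
  assert (Hiu : g (vscal iC u) = 0).
  { pose proof (complexified_bound u) as H. rewrite Hgu in H.
    set (b := g (vscal iC u)) in *.
    pose proof (sqrt_sqrt (vnorm u * vnorm u + b * b)).
    pose proof (sqrt_pos (vnorm u * vnorm u + b * b)). nra. }
  exists (fun x => mkC (vnorm u * g x) (- (vnorm u * g (vscal iC x)))).
  apply in_D_intro; auto; simpl.
  - intros x y. rewrite vscal_addr, !Hadd. apply Cx_eq; simpl; ring.
  - intros [p q] x. rewrite real_functional_complex, vscal_assoc.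
    replace (K_mul iC (mkC p q : K ComplexK)) with (mkC (-q) p : K ComplexK)
      by (apply Cx_eq; simpl; ring).
    rewrite real_functional_complex. apply Cx_eq; simpl; ring.
  - intros x. unfold Cabs; simpl.
    replace (vnorm u * g x * (vnorm u * g x)
             + - (vnorm u * g (vscal iC x)) * - (vnorm u * g (vscal iC x)))
      with ((vnorm u * vnorm u) * (g x * g x + g (vscal iC x) * g (vscal iC x))) by ring.
    rewrite sqrt_mult, sqrt_square by nra.
    apply Rmult_le_compat_l; [lra|apply complexified_bound].
  - rewrite Hgu, Hiu. apply Cx_eq; simpl; ring.
Qed.

End Complexification.

Lemma supporting_functional {k} {X : NormedSpace k} (u : X) :
  u <> vzero X -> exists f : X -> K k, in_D u f.
Proof.
  destruct k; [apply supporting_functional_real|].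
  destruct (norming_real_functional u) as [g [Hadd [Hmul [Hle Hgu]]]].
  apply (supporting_functional_complex X g); auto.
Qed.

Section LipschitzNorm.
Context {k : kind} {X : NormedSpace k}.

Lemma lip_norm_spec (F : X -> X) : (exists x : X, x <> vzero X) ->
  (exists M, forall x y, vnorm (vsub (F x) (F y)) <= M * vnorm (vsub x y)) ->
  is_lub (lip_quotients F) (lip_norm F).
Proof.
  intros [x0 Hx0] [M HM]. unfold lip_norm. apply epsilon_spec.
  destruct (completeness (lip_quotients F)) as [l Hl].
  - exists M. intros s [x [y [Hxy ->]]].
    pose proof (vnorm_pos _ (vsub_neq0 x y Hxy)). pose proof (HM x y).
    apply (Rmult_le_reg_r (vnorm (vsub x y))); auto.
    unfold Rdiv. rewrite Rmult_assoc, Rinv_l by lra. lra.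
  - exists (vnorm (vsub (F x0) (F (vzero X))) / vnorm (vsub x0 (vzero X))).
    exists x0, (vzero X). auto.
  - exists l; auto.
Qed.

Lemma lip_quotient_le (F : X -> X) (x y : X) (l : R) :
  is_lub (lip_quotients F) l -> x <> y ->
  vnorm (vsub (F x) (F y)) <= l * vnorm (vsub x y).
Proof.
  intros Hl Hxy. pose proof (vnorm_pos _ (vsub_neq0 x y Hxy)).
  assert (H1 : vnorm (vsub (F x) (F y)) / vnorm (vsub x y) <= l)
    by (apply (proj1 Hl); exists x, y; auto).
  apply (Rmult_le_compat_r (vnorm (vsub x y))) in H1; [|lra].
  unfold Rdiv in H1. rewrite Rmult_assoc, Rinv_l in H1 by lra. lra.
Qed.

End LipschitzNorm.

Lemma lim_right0_squeeze (Q : R -> R) (m B : R) : 0 <= B ->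
  (forall t, 0 < t -> m <= Q t) ->
  (forall t, 0 < t -> t * Rabs m <= 1 / 2 -> Q t - m <= B * t) ->
  lim_right0 Q m.
Proof.
  intros HB Hlow Hup eps Heps. pose proof (Rabs_pos m).
  exists (Rmin (/ (2 * (Rabs m + 1))) (eps / (B + 1))). split.
  { apply Rmin_glb_lt; [apply Rinv_0_lt_compat | apply Rdiv_lt_0_compat]; lra. }
  intros t [Ht Htd].
  assert (Ht1 : t * (2 * (Rabs m + 1)) < 1).
  { apply (Rmult_lt_reg_r (/ (2 * (Rabs m + 1)))); [apply Rinv_0_lt_compat; lra|].
    rewrite Rmult_assoc, Rinv_r, Rmult_1_l, Rmult_1_r by lra.
    eapply Rlt_le_trans; [exact Htd|apply Rmin_l]. }
  assert (Ht2 : t * (B + 1) < eps).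
  { apply (Rmult_lt_reg_r (/ (B + 1))); [apply Rinv_0_lt_compat; lra|].
    rewrite Rmult_assoc, Rinv_r, Rmult_1_r by lra.
    eapply Rlt_le_trans; [exact Htd|apply Rmin_r]. }
  pose proof (Hlow t Ht). pose proof (Hup t Ht ltac:(nra)).
  rewrite Rabs_pos_eq by lra. nra.
Qed.

Section DerivativeFormula.
Context {k : kind} {X : NormedSpace k}.
Variables (S : X -> X) (C m : R).
Hypotheses (Hnt : exists x : X, x <> vzero X) (HC : 0 <= C)
  (HS : forall x y, vnorm (vsub (S x) (S y)) <= C * vnorm (vsub x y))
  (Hm : is_lub (fun r => exists mu, in_W S mu /\ r = K_re mu) m).

Let N (t : R) : R := lip_norm (fun x => vadd x (rscal t (S x))).

Lemma perturbation_lip_norm (t : R) : 0 < t ->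
  is_lub (lip_quotients (fun x => vadd x (rscal t (S x)))) (N t).
Proof.
  intros Ht. apply lip_norm_spec; auto. exists (1 + t * C). intros x y.
  rewrite vsub_perturb. eapply Rle_trans; [apply vnorm_triangle|].
  rewrite vnorm_rscal, Rabs_pos_eq by lra. pose proof (HS x y). nra.
Qed.

(* Testing N(t) on a pair x ≠ y against some f ∈ D(x - y). *)
Lemma derivative_lower_bound (t : R) : 0 < t -> m <= (N t - 1) / t.
Proof.
  intros Ht. apply (proj2 Hm). intros r [mu [[x [y [f [Hxy [HD ->]]]]] ->]].
  set (u := vsub x y) in *. set (v := vsub (S x) (S y)).
  pose proof (vnorm_pos u (vsub_neq0 x y Hxy)) as Hn.
  destruct (in_D_props u f (vsub_neq0 x y Hxy) HD) as [Hfu Hfb].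
  pose proof (lip_quotient_le _ x y (N t) (perturbation_lip_norm t Ht) Hxy) as Hq.
  cbv beta in Hq. rewrite vsub_perturb in Hq. fold u v in Hq.
  pose proof (dual_re_add f (proj1 HD) u v t) as Hl.
  pose proof (K_re_bounds (f (vadd u (rscal t v)))).
  pose proof (Hfb (vadd u (rscal t v))).
  rewrite K_re_mulR.
  set (n := vnorm u) in *. set (A := vnorm (vadd u (rscal t v))) in *.
  set (B := K_re (f v)) in *.
  assert (n * n + t * B <= n * (N t * n)) by (assert (n * A <= n * (N t * n)) by nra; lra).
  assert (1 + t * (/ (n ^ 2) * B) <= N t).
  { apply (Rmult_le_reg_r (n * n)); [nra|].
    replace ((1 + t * (/ n ^ 2 * B)) * (n * n)) with (n * n + t * B) by (field; lra). nra. }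
  apply (Rmult_le_reg_r t); auto. replace ((N t - 1) / t * t) with (N t - 1) by (field; lra).
  lra.
Qed.

(* Moving y to y' = y - t(Sx - Sy) changes Sx - Sy by at most C²t‖x - y‖. *)
Lemma shifted_difference_bound (t : R) (x y : X) : 0 <= t ->
  vnorm (vsub (vsub (S x) (S y)) (vsub (S x) (S (vsub y (rscal t (vsub (S x) (S y)))))))
  <= C * C * t * vnorm (vsub x y).
Proof.
  intros Ht. rewrite vsub_vsub_common. eapply Rle_trans; [apply HS|].
  rewrite vsub_vsub_rscal_l, vnorm_rscal, Rabs_left1, Ropp_involutive by lra.
  pose proof (HS x y).
  assert (t * vnorm (vsub (S x) (S y)) <= t * (C * vnorm (vsub x y)))
    by (apply Rmult_le_compat_l; lra).
  apply (Rmult_le_compat_l C) in H0; [|lra]. lra.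
Qed.

(* For u = x - y and u' = u + t(Sx - Sy) = x - y' with y' = y - t(Sx - Sy),
   testing against g ∈ D(u') gives ‖u'‖(1 - tm) <= ‖u‖(1 + C²t²). *)
Lemma perturbed_pair_bound (t : R) (x y : X) : 0 < t -> t * m < 1 -> x <> y ->
  vnorm (vadd (vsub x y) (rscal t (vsub (S x) (S y)))) * (1 - t * m)
  <= vnorm (vsub x y) * (1 + C * C * (t * t)).
Proof.
  intros Ht Htm Hxy.
  set (u := vsub x y). set (v := vsub (S x) (S y)). set (u' := vadd u (rscal t v)).
  pose proof (vnorm_pos u (vsub_neq0 x y Hxy)) as Hn.
  destruct (classic (u' = vzero X)) as [H0|H0].
  { rewrite H0, vnorm_vzero, Rmult_0_l.
    apply Rmult_le_pos; [lra|]. pose proof (Rle_0_sqr (C * t)). unfold Rsqr in *. nra. }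
  pose proof (vnorm_pos u' H0) as Hn'.
  set (y' := vsub y (rscal t v)).
  assert (Hxy' : vsub x y' = u') by apply vsub_vsub_rscal.
  destruct (supporting_functional u' H0) as [g Hg].
  destruct (in_D_props u' g H0 Hg) as [Hgu Hgb].
  assert (Hxy2 : x <> y') by (intro E; apply H0; rewrite <- Hxy', E; apply vsub_eq0; auto).
  set (v' := vsub (S x) (S y')).
  assert (Hgv' : K_re (g v') <= m * (vnorm u' * vnorm u')).
  { assert (Hmu : K_re (K_mul (K_of_R (/ (vnorm (vsub x y') ^ 2))) (g v')) <= m).
    { apply (proj1 Hm). eexists; split; [|reflexivity]. exists x, y', g. rewrite Hxy'. auto. }
    rewrite K_re_mulR, Hxy' in Hmu.
    apply (Rmult_le_compat_l (vnorm u' ^ 2)) in Hmu; [|nra].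
    replace (vnorm u' ^ 2 * (/ vnorm u' ^ 2 * K_re (g v'))) with (K_re (g v')) in Hmu
      by (field; lra).
    nra. }
  pose proof (shifted_difference_bound t x y (Rlt_le _ _ Ht)) as Hvv. fold u v y' v' in Hvv.
  pose proof (dual_re_add g (proj1 Hg) u v t) as E1. fold u' in E1.
  pose proof (dual_re_sub g (proj1 Hg) v v') as E2.
  pose proof (K_re_bounds (g u)). pose proof (Hgb u).
  pose proof (K_re_bounds (g (vsub v v'))). pose proof (Hgb (vsub v v')).
  set (n := vnorm u) in *. set (n' := vnorm u') in *.
  assert (K_re (g (vsub v v')) <= n' * (C * C * t * n)).
  { eapply Rle_trans; [|apply Rmult_le_compat_l; [lra|exact Hvv]]. lra. }
  assert (n' * n' <= n' * (n + t * m * n' + C * C * (t * t) * n)) by nra.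
  assert (n' <= n + t * m * n' + C * C * (t * t) * n) by (apply (Rmult_le_reg_l n'); auto).
  nra.
Qed.

Lemma derivative_upper_bound (t : R) : 0 < t -> t * m < 1 ->
  N t * (1 - t * m) <= 1 + C * C * (t * t).
Proof.
  intros Ht Htm.
  assert (N t <= (1 + C * C * (t * t)) / (1 - t * m)); [|
    apply (Rmult_le_compat_r (1 - t * m)) in H; [|lra];
    unfold Rdiv in H; rewrite Rmult_assoc, Rinv_l in H by lra; lra].
  apply (proj2 (perturbation_lip_norm t Ht)). intros s [x [y [Hxy ->]]].
  rewrite vsub_perturb.
  pose proof (perturbed_pair_bound t x y Ht Htm Hxy) as Key.
  pose proof (vnorm_pos _ (vsub_neq0 x y Hxy)).
  apply (Rmult_le_reg_r (vnorm (vsub x y))); auto. unfold Rdiv.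
  rewrite Rmult_assoc, Rinv_l, Rmult_1_r by lra.
  apply (Rmult_le_reg_r (1 - t * m)); [lra|].
  replace ((1 + C * C * (t * t)) * / (1 - t * m) * vnorm (vsub x y) * (1 - t * m))
    with (vnorm (vsub x y) * (1 + C * C * (t * t))) by (field; lra).
  exact Key.
Qed.

Lemma derivative_formula : lim_right0 (fun t => (N t - 1) / t) m.
Proof.
  apply (lim_right0_squeeze _ m (2 * (C * C + m * m))); [nra|apply derivative_lower_bound|].
  intros t Ht Htm. pose proof (Rle_abs m).
  pose proof (derivative_upper_bound t Ht ltac:(nra)) as U.
  set (Q := (N t - 1) / t).
  assert (HN : N t = 1 + t * Q) by (unfold Q; field; lra).
  rewrite HN in U.
  assert (Q - m - t * Q * m <= C * C * t) by (apply (Rmult_le_reg_l t); auto; nra).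
  assert (H2 : (Q - m) * (1 - t * m) <= (C * C + m * m) * t) by nra.
  assert (t * m <= 1 / 2) by nra.
  destruct (Rle_dec 0 (Q - m)); [nra|]. pose proof (Rle_0_sqr C). pose proof (Rle_0_sqr m).
  unfold Rsqr in *. nra.
Qed.

End DerivativeFormula.

Definition rot_re {k : kind} (L : K k -> Prop) (al : K k) (r : R) : Prop :=
  exists lam, L lam /\ r = K_re (K_mul al lam).

Lemma rot_re_one {k : kind} (L : K k -> Prop) :
  rot_re L (K_of_R 1) = fun r => exists lam, L lam /\ r = K_re lam.
Proof.
  apply functional_extensionality; intros r. unfold rot_re. f_equal.
  apply functional_extensionality; intros lam. rewrite K_mul_1_l. reflexivity.
Qed.

Definition abs_set {k : kind} (L : K k -> Prop) (s : R) : Prop :=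
  exists lam, L lam /\ s = K_abs lam.

Section RotatedSuprema.
Context {k : kind}.
Variables (L : K k -> Prop) (w : R).
Hypotheses (HL : exists lam, L lam) (Hw : is_lub (abs_set L) w).

Lemma abs_le_radius (lam : K k) : L lam -> K_abs lam <= w.
Proof. intros Hlam. apply (proj1 Hw). exists lam; auto. Qed.

Lemma rot_re_le (al : K k) : in_circle al -> forall r, rot_re L al r -> r <= w.
Proof.
  intros Hal r [lam [Hlam ->]]. pose proof (K_re_bounds (K_mul al lam)).
  rewrite K_abs_mul, Hal, Rmult_1_l in H. pose proof (abs_le_radius lam Hlam). lra.
Qed.

Lemma rot_re_lub (al : K k) : in_circle al -> exists l, is_lub (rot_re L al) l /\ l <= w.
Proof.
  intros Hal. destruct HL as [lam0 Hlam0].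
  destruct (completeness (rot_re L al)) as [l Hl].
  - exists w. exact (rot_re_le al Hal).
  - exists (K_re (K_mul al lam0)), lam0. auto.
  - exists l. split; auto. apply (proj2 Hl). exact (rot_re_le al Hal).
Qed.

End RotatedSuprema.

(* Over R the rotations are ±1, and |λ| is one of ±λ. *)
Lemma circle_sup_attained_real (L : K RealK -> Prop) (w : R) :
  (exists lam, L lam) -> is_lub (abs_set L) w ->
  exists al : K RealK, in_circle al /\ is_lub (rot_re L al) w.
Proof.
  intros HL Hw.
  assert (Hc1 : @in_circle RealK 1) by apply Rabs_R1.
  assert (Hc2 : @in_circle RealK (-1)) by (unfold in_circle; simpl; rewrite Rabs_left; lra).
  destruct (rot_re_lub L w HL Hw 1 Hc1) as [l1 [H1 Hl1]].
  destruct (rot_re_lub L w HL Hw (-1) Hc2) as [l2 [H2 Hl2]].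
  assert (Hwm : w <= Rmax l1 l2).
  { apply (proj2 Hw). intros s [lam [Hlam ->]]. simpl. destruct (Rle_dec 0 lam).
    - rewrite Rabs_pos_eq by auto. eapply Rle_trans; [|apply Rmax_l].
      apply (proj1 H1). exists lam. split; auto. symmetry. apply Rmult_1_l.
    - rewrite Rabs_left by lra. eapply Rle_trans; [|apply Rmax_r].
      apply (proj1 H2). exists lam. split; auto.
      exact ((fun z : R => ltac:(ring) : - z = -1 * z) lam). }
  destruct (Rle_dec l1 l2).
  - exists (-1). split; auto. rewrite Rmax_right in Hwm by auto. replace w with l2 by lra. auto.
  - exists 1. split; auto. rewrite Rmax_left in Hwm by lra. replace w with l1 by lra. auto.
Qed.

Lemma continuous_of_trig_bound (phi : R -> R) (w x0 : R) : 0 <= w ->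
  (forall a b, phi a <= phi b + (Rabs (cos a - cos b) + Rabs (sin a - sin b)) * w) ->
  continuity_pt phi x0.
Proof.
  intros Hw Hb eps Heps.
  set (e' := eps / (2 * (w + 1))).
  assert (He' : 0 < e') by (unfold e'; apply Rdiv_lt_0_compat; lra).
  destruct (continuity_cos x0 e' He') as [d1 [Hd1 H1]].
  destruct (continuity_sin x0 e' He') as [d2 [Hd2 H2]].
  exists (Rmin d1 d2). split; [apply Rmin_glb_lt; auto|].
  intros x [Hx Hd]. simpl in *. unfold Rdist in *.
  assert (Hc : Rabs (cos x - cos x0) < e').
  { apply H1. split; auto. eapply Rlt_le_trans; [exact Hd|apply Rmin_l]. }
  assert (Hs : Rabs (sin x - sin x0) < e').
  { apply H2. split; auto. eapply Rlt_le_trans; [exact Hd|apply Rmin_r]. }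
  pose proof (Hb x x0). pose proof (Hb x0 x).
  rewrite (Rabs_minus_sym (cos x0)), (Rabs_minus_sym (sin x0)) in H0.
  assert ((Rabs (cos x - cos x0) + Rabs (sin x - sin x0)) * w <= 2 * e' * w) by nra.
  assert (2 * e' * w < eps).
  { unfold e'. apply (Rmult_lt_reg_r (w + 1)); [lra|].
    replace (2 * (eps / (2 * (w + 1))) * w * (w + 1)) with (eps * w) by (field; lra). nra. }
  apply Rabs_def1; lra.
Qed.

Lemma circle_angle (a b : R) : a * a + b * b = 1 ->
  exists th, 0 <= th <= 2 * PI /\ cos th = a /\ sin th = b.
Proof.
  intros H. assert (Ha : -1 <= a <= 1) by nra.
  pose proof (acos_bound a). pose proof PI_RGT_0.
  assert (Hs : sqrt (1 - a²) = Rabs b) by (rewrite <- sqrt_Rsqr_abs; f_equal; unfold Rsqr; lra).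
  destruct (Rle_dec 0 b).
  - exists (acos a). split; [lra|]. rewrite cos_acos, sin_acos by auto.
    rewrite Hs, Rabs_pos_eq; auto.
  - exists (2 * PI - acos a). split; [lra|].
    rewrite cos_minus, sin_minus, cos_2PI, sin_2PI, cos_acos, sin_acos by auto.
    rewrite Hs, Rabs_left by lra. split; ring.
Qed.

Section ComplexRotations.
Variables (L : K ComplexK -> Prop) (w : R).
Hypotheses (HL : exists lam, L lam) (Hw : is_lub (abs_set L) w).

Definition eiC (th : R) : K ComplexK := mkC (cos th) (sin th).

Lemma eiC_circle (th : R) : in_circle (eiC th).
Proof.
  unfold in_circle; simpl. unfold Cabs; simpl. rewrite <- sqrt_1. f_equal.
  pose proof (sin2_cos2 th). unfold Rsqr in H. lra.
Qed.

Definition rot_sup (th : R) : R := epsilon (inhabits 0) (is_lub (rot_re L (eiC th))).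

Lemma rot_sup_spec (th : R) : is_lub (rot_re L (eiC th)) (rot_sup th).
Proof.
  unfold rot_sup. apply epsilon_spec.
  destruct (rot_re_lub L w HL Hw (eiC th) (eiC_circle th)) as [l [Hl _]].
  exists l; exact Hl.
Qed.

Lemma rot_sup_continuous (x0 : R) : continuity_pt rot_sup x0.
Proof.
  destruct HL as [lam0 Hlam0].
  apply (continuous_of_trig_bound rot_sup w x0).
  { pose proof (abs_le_radius L w Hw lam0 Hlam0). pose proof (K_abs_nonneg lam0). lra. }
  intros a b. apply (proj2 (rot_sup_spec a)). intros r [lam [Hlam ->]].
  assert (Hb : K_re (K_mul (eiC b) lam) <= rot_sup b)
    by (apply (proj1 (rot_sup_spec b)); exists lam; auto).
  pose proof (abs_le_radius L w Hw lam Hlam).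
  destruct lam as [lr li]. simpl in *.
  pose proof (Cre_le_abs (mkC lr li)). pose proof (Cim_le_abs (mkC lr li)). simpl in *.
  assert ((cos a - cos b) * lr <= Rabs (cos a - cos b) * w).
  { eapply Rle_trans; [apply Rle_abs|]. rewrite Rabs_mult.
    apply Rmult_le_compat_l; [apply Rabs_pos|lra]. }
  assert (- ((sin a - sin b) * li) <= Rabs (sin a - sin b) * w).
  { eapply Rle_trans; [apply Rle_abs|]. rewrite Rabs_Ropp, Rabs_mult.
    apply Rmult_le_compat_l; [apply Rabs_pos|lra]. }
  lra.
Qed.

Lemma abs_as_rot_re (lam : K ComplexK) :
  exists th, 0 <= th <= 2 * PI /\ K_abs lam = K_re (K_mul (eiC th) lam).
Proof.
  destruct (K_abs_nonneg lam) as [Hp|Hz].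
  - destruct lam as [lr li]. simpl in *. set (rho := Cabs (mkC lr li)) in *.
    assert (Hr2 : rho * rho = lr * lr + li * li)
      by (unfold rho, Cabs; simpl; apply sqrt_sqrt; nra).
    destruct (circle_angle (lr / rho) (- li / rho)) as [th [Hth [Hc Hs]]].
    { replace (lr / rho * (lr / rho) + - li / rho * (- li / rho))
        with ((lr * lr + li * li) / (rho * rho)) by (field; lra).
      rewrite <- Hr2. field. lra. }
    exists th. split; auto. simpl. rewrite Hc, Hs.
    replace (lr / rho * lr - - li / rho * li) with ((lr * lr + li * li) / rho) by (field; lra).
    fold rho. rewrite <- Hr2. field. lra.
  - exists 0. split; [pose proof PI_RGT_0; lra|].
    pose proof (K_re_bounds (K_mul (eiC 0) lam)).
    rewrite K_abs_mul, <- Hz, Rmult_0_r in H. lra.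
Qed.

(* The maximum of the continuous φ on [0, 2π] is w. *)
Lemma circle_sup_attained_complex :
  exists al : K ComplexK, in_circle al /\ is_lub (rot_re L al) w.
Proof.
  pose proof PI_RGT_0.
  destruct (continuity_ab_maj rot_sup 0 (2 * PI)) as [ts [Hmax Hts]];
    [lra|intros; apply rot_sup_continuous|].
  exists (eiC ts). split; [apply eiC_circle|].
  assert (Hle : rot_sup ts <= w)
    by (apply (proj2 (rot_sup_spec ts)); exact (rot_re_le L w Hw _ (eiC_circle ts))).
  assert (Hge : w <= rot_sup ts).
  { apply (proj2 Hw). intros s [lam [Hlam ->]].
    destruct (abs_as_rot_re lam) as [th [Hth ->]].
    apply Rle_trans with (rot_sup th); [|apply Hmax; auto].
    apply (proj1 (rot_sup_spec th)). exists lam. auto. }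
  replace w with (rot_sup ts) by lra. apply rot_sup_spec.
Qed.

End ComplexRotations.

Lemma circle_sup_attained {k : kind} (L : K k -> Prop) (w : R) :
  (exists lam, L lam) -> is_lub (abs_set L) w ->
  exists al : K k, in_circle al /\ is_lub (rot_re L al) w.
Proof.
  destruct k; [apply circle_sup_attained_real | apply circle_sup_attained_complex].
Qed.

Section NumericalRange.
Context {k : kind} {X : NormedSpace k}.

Lemma in_W_scal (T : X -> X) (al mu : K k) :
  in_W (fun x => vscal al (T x)) mu <-> exists lam, in_W T lam /\ mu = K_mul al lam.
Proof.
  assert (Hrot : forall (x y : X) (f : X -> K k), in_dual f ->
            K_mul (K_of_R (/ vnorm (vsub x y) ^ 2)) (f (vsub (vscal al (T x)) (vscal al (T y))))
            = K_mul al (K_mul (K_of_R (/ vnorm (vsub x y) ^ 2)) (f (vsub (T x) (T y))))).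
  { intros x y f Hf. rewrite vscal_vsub, (proj1 (proj2 Hf)), !K_mul_assoc.
    f_equal. apply K_mul_comm. }
  split.
  - intros [x [y [f [Hxy [HD ->]]]]].
    eexists. split; [exists x, y, f; split; [|split]; eauto|]. apply Hrot, HD.
  - intros [lam [[x [y [f [Hxy [HD ->]]]]] ->]].
    exists x, y, f. split; [|split]; auto. symmetry. apply Hrot, HD.
Qed.

Lemma lip_quot_scal (al : K k) (T : X -> X) :
  lip_quot al T = fun t => (lip_norm (fun x => vadd x (rscal t (vscal al (T x)))) - 1) / t.
Proof.
  apply functional_extensionality. intros t. unfold lip_quot, id_plus. do 3 f_equal.
  apply functional_extensionality. intros x. unfold rscal. rewrite vscal_assoc. reflexivity.
Qed.

Lemma in_W_bound (T : X -> X) (C : R) :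
  (forall x y, vnorm (vsub (T x) (T y)) <= C * vnorm (vsub x y)) ->
  forall lam, in_W T lam -> K_abs lam <= C.
Proof.
  intros HT lam [x [y [f [Hxy [HD ->]]]]].
  pose proof (vnorm_pos _ (vsub_neq0 x y Hxy)) as Hn.
  destruct (in_D_props _ f (vsub_neq0 x y Hxy) HD) as [_ Hb].
  rewrite K_abs_mul, K_abs_of_R, Rabs_pos_eq by (left; apply Rinv_0_lt_compat; nra).
  pose proof (Hb (vsub (T x) (T y))). pose proof (HT x y).
  set (n := vnorm (vsub x y)) in *.
  apply (Rmult_le_reg_l (n ^ 2)); [nra|].
  replace (n ^ 2 * (/ n ^ 2 * K_abs (f (vsub (T x) (T y))))) with (K_abs (f (vsub (T x) (T y))))
    by (field; lra).
  nra.
Qed.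

Lemma in_W_nonempty (T : X -> X) : (exists x : X, x <> vzero X) -> exists lam, in_W T lam.
Proof.
  intros [x0 Hx0]. destruct (supporting_functional _ (vsub_neq0 x0 (vzero X) Hx0)) as [f Hf].
  eexists. exists x0, (vzero X), f. auto.
Qed.

Lemma num_radius_exists (T : X -> X) (C : R) : (exists x : X, x <> vzero X) ->
  (forall x y, vnorm (vsub (T x) (T y)) <= C * vnorm (vsub x y)) ->
  exists w, is_num_radius T w.
Proof.
  intros Hnt HT. destruct (in_W_nonempty T Hnt) as [lam0 Hlam0].
  destruct (completeness (abs_set (in_W T))) as [w Hw].
  - exists C. intros s [lam [Hlam ->]]. apply (in_W_bound T C HT lam Hlam).
  - exists (K_abs lam0), lam0. auto.
  - exists w. exact Hw.
Qed.

Lemma lipschitz_nonneg_const (T : X -> X) : lipschitz T ->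
  exists C, 0 <= C /\ forall x y, vnorm (vsub (T x) (T y)) <= C * vnorm (vsub x y).
Proof.
  intros [M HM]. exists (Rabs M). split; [apply Rabs_pos|]. intros x y.
  eapply Rle_trans; [apply HM|].
  apply Rmult_le_compat_r; [apply vnorm_nonneg|apply Rle_abs].
Qed.

Lemma lip_quot_limit (T : X -> X) (C : R) (al : K k) (l : R) :
  (exists x : X, x <> vzero X) -> 0 <= C ->
  (forall x y, vnorm (vsub (T x) (T y)) <= C * vnorm (vsub x y)) ->
  is_lub (rot_re (in_W T) al) l -> lim_right0 (lip_quot al T) l.
Proof.
  intros Hnt HC HT Hl. rewrite lip_quot_scal.
  pose proof (K_abs_nonneg al).
  apply (derivative_formula _ (K_abs al * C)); auto; [nra| |].
  - intros x y. rewrite vscal_vsub, vnorm_scal, Rmult_assoc.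
    apply Rmult_le_compat_l; auto.
  - destruct Hl as [Hub Hleast]. split.
    + intros r [mu [Hmu ->]]. apply in_W_scal in Hmu as [lam [Hlam ->]].
      apply Hub. exists lam; auto.
    + intros b Hb. apply Hleast. intros r [lam [Hlam ->]].
      apply Hb. exists (K_mul al lam). split; auto. apply in_W_scal. eauto.
Qed.

End NumericalRange.

Theorem theorem2p1 (k : kind) (X : NormedSpace k) (HB : Banach X)
  (Hnt : exists x : X, x <> vzero X)
  (T : X -> X) (HT : in_Lip0 T) :
  (exists L : R,
     lim_right0 (lip_quot (K_of_R 1) T) L /\
     is_lub (fun r => exists lam, in_W T lam /\ r = K_re lam) L) /\
  (exists w : R, is_num_radius T w /\
     (forall alpha : K k, in_circle alpha ->
        exists l, lim_right0 (lip_quot alpha T) l /\ l <= w) /\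
     (exists alpha : K k, in_circle alpha /\ lim_right0 (lip_quot alpha T) w)).
Proof.
  destruct (lipschitz_nonneg_const T (proj1 HT)) as [C [HC HTC]].
  destruct (num_radius_exists T C Hnt HTC) as [w Hw].
  pose proof (in_W_nonempty T Hnt) as HW.
  pose proof (lip_quot_limit T C) as Hlim.
  split.
  - assert (H1 : @in_circle k (K_of_R 1)) by (unfold in_circle; rewrite K_abs_of_R; apply Rabs_R1).
    destruct (rot_re_lub _ w HW Hw _ H1) as [L [HL _]].
    exists L. split; [apply Hlim; auto|].
    rewrite rot_re_one in HL. exact HL.
  - exists w. split; [exact Hw|split].
    + intros al Hal. destruct (rot_re_lub _ w HW Hw al Hal) as [l [Hl Hlw]].
      exists l. split; [apply Hlim|]; auto.
    + destruct (circle_sup_attained _ w HW Hw) as [al [Hal Hlub]].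
      exists al. split; [|apply Hlim]; auto.
Qed.
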